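(* Let $(Q,\cdot)$ be a quasigroup. Then each of the following three identities holds in $Q$ (for all $x,y,z\in Q$) if and only if $Q$ satisfies the left alternative law $x(xy)=(xx)y$ for all $x,y\in Q$: (A13) $x(x(yz))=(xx)(yz)$; (A45) $(x(xy))z=((xx)y)z$; (C12) $x(y(yz))=x((yy)z)$.
   Context: A quasigroup is a set $Q$ with a binary operation $\cdot$ (written as juxtaposition) such that for all $a,b\in Q$ each of the equations $ax=b$ and $ya=b$ has a unique solution in $Q$. *)

Definition is_quasigroup (Q : Type) (mul : Q -> Q -> Q) : Prop :=
  forall a b : Q,
    (exists! x : Q, mul a x = b) /\ (exists! y : Q, mul y a = b).

Definition left_alternative (Q : Type) (mul : Q -> Q -> Q) : Prop :=
  forall x y : Q, mul x (mul x y) = mul (mul x x) y.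

Definition identity_A13 (Q : Type) (mul : Q -> Q -> Q) : Prop :=
  forall x y z : Q, mul x (mul x (mul y z)) = mul (mul x x) (mul y z).

Definition identity_A45 (Q : Type) (mul : Q -> Q -> Q) : Prop :=
  forall x y z : Q, mul (mul x (mul x y)) z = mul (mul (mul x x) y) z.

Definition identity_C12 (Q : Type) (mul : Q -> Q -> Q) : Prop :=
  forall x y z : Q, mul x (mul y (mul y z)) = mul x (mul (mul y y) z).


(* Each identity is the left alternative law in disguise: in (A13) the product
   yz ranges over all of Q, (A45) is the law multiplied on the right by z and
   (C12) is it multiplied on the left by x, so right resp. left cancellation
   strips the extra factor. The converse directions are congruences. *)

Section Magma.

Variables (Q : Type) (mul : Q -> Q -> Q).

Definition left_cancellative : Prop :=
  forall x u v : Q, mul x u = mul x v -> u = v.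

Definition right_cancellative : Prop :=
  forall z u v : Q, mul u z = mul v z -> u = v.

Definition mul_surjective : Prop :=
  forall b : Q, exists u v : Q, mul u v = b.

Lemma left_alternative_A13 : left_alternative Q mul -> identity_A13 Q mul.
Proof. intros H x y z. apply H. Qed.

Lemma left_alternative_A45 : left_alternative Q mul -> identity_A45 Q mul.
Proof. intros H x y z. rewrite H. reflexivity. Qed.

Lemma left_alternative_C12 : left_alternative Q mul -> identity_C12 Q mul.
Proof. intros H x y z. rewrite H. reflexivity. Qed.

Lemma A13_left_alternative :
  mul_surjective -> identity_A13 Q mul -> left_alternative Q mul.
Proof.
  intros Hsurj H x y. destruct (Hsurj y) as [u [v <-]]. apply H.
Qed.

Lemma A45_left_alternative :
  right_cancellative -> identity_A45 Q mul -> left_alternative Q mul.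
Proof. intros Hrc H x y. apply (Hrc x). apply H. Qed.

Lemma C12_left_alternative :
  left_cancellative -> identity_C12 Q mul -> left_alternative Q mul.
Proof. intros Hlc H x y. apply (Hlc x). apply H. Qed.

Hypothesis HQ : is_quasigroup Q mul.

Lemma quasigroup_left_cancellative : left_cancellative.
Proof.
  intros x u v Huv. destruct (HQ x (mul x u)) as [[w [_ Hw]] _].
  transitivity w; [symmetry |]; apply Hw; auto.
Qed.

Lemma quasigroup_right_cancellative : right_cancellative.
Proof.
  intros z u v Huv. destruct (HQ z (mul u z)) as [_ [w [_ Hw]]].
  transitivity w; [symmetry |]; apply Hw; auto.
Qed.

Lemma quasigroup_mul_surjective : mul_surjective.
Proof.
  intros b. destruct (HQ b b) as [[v [Hv _]] _]. exists b, v. exact Hv.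
Qed.

End Magma.

Theorem mainTheorem3 (Q : Type) (mul : Q -> Q -> Q) (HQ : is_quasigroup Q mul) :
  (identity_A13 Q mul <-> left_alternative Q mul) /\
  (identity_A45 Q mul <-> left_alternative Q mul) /\
  (identity_C12 Q mul <-> left_alternative Q mul).
Proof.
  split; [| split]; split.
  - apply A13_left_alternative, quasigroup_mul_surjective, HQ.
  - apply left_alternative_A13.
  - apply A45_left_alternative, quasigroup_right_cancellative, HQ.
  - apply left_alternative_A45.
  - apply C12_left_alternative, quasigroup_left_cancellative, HQ.
  - apply left_alternative_C12.
Qed.
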